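(* Let $l\ge 2$ and let $\Gamma$ be the $l$-lattice. Then the spectrum of its (signless) normalized Laplacian is given by: $0$, with multiplicity $l^2-2l+1$; $\frac{l}{2}$, with multiplicity $2(l-1)$; and $l$, with multiplicity $1$.
   Context: A hypergraph $\Gamma=(\mathcal{V},\mathcal{H})$ has a finite vertex set $\mathcal{V}$ and a set $\mathcal{H}$ of nonempty subsets of $\mathcal{V}$ (hyperedges). $\deg(v)$ is the number of hyperedges containing $v$, $D$ the diagonal degree matrix, $A$ the matrix with $A_{ii}=0$ and $A_{ij}=-\#\{h\in\mathcal{H}: v_i,v_j\in h\}$ for $i\ne j$, and the (signless) normalized Laplacian is $L=\mathrm{Id}-D^{-1}A$. For $l\in\mathbb{N}_{\ge 2}$, the $l$-lattice is the hypergraph with vertex set $\{v_{ab}: a,b\in\{1,\ldots,l\}\}$ ($l^2$ vertices arranged in an $l\times l$ grid) and $2l$ hyperedges, namely the rows $\{v_{a1},\ldots,v_{al}\}$ for $a=1,\ldots,l$ and the columns $\{v_{1b},\ldots,v_{lb}\}$ for $b=1,\ldots,l$. *)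

From HB Require Import structures.
From mathcomp Require Import all_boot all_order all_algebra.
Set Implicit Arguments. Unset Strict Implicit. Unset Printing Implicit Defensive.
Import Order.TTheory GRing.Theory Num.Theory.
Local Open Scope ring_scope.

(* A hypergraph on a finite vertex type V: a set H of (nonempty) subsets of V.
   Matrices are indexed by 'I_#|V| via the enumeration enum_val of V
   (the spectrum does not depend on this ordering). *)
Section Hypergraph.
Variables (R : fieldType) (V : finType) (H : {set {set V}}).

Definition hdeg (v : V) : nat := #|[set h in H | v \in h]|.

Definition hcommon (v w : V) : nat := #|[set h in H | (v \in h) && (w \in h)]|.

Definition hDeg : 'M[R]_#|V| :=
  \matrix_(i, j) if i == j then (hdeg (enum_val i))%:R else 0.

Definition hAdj : 'M[R]_#|V| :=
  \matrix_(i, j) if i == j then 0 else - (hcommon (enum_val i) (enum_val j))%:R.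

Definition hLaplacian : 'M[R]_#|V| := 1%:M - invmx hDeg *m hAdj.
End Hypergraph.

(* The l-lattice: vertices v_ab = (a, b) in 'I_l * 'I_l, hyperedges are the
   rows {v_a1..v_al} and the columns {v_1b..v_lb}. *)
Definition lattice_row (l : nat) (a : 'I_l) : {set 'I_l * 'I_l} :=
  [set v | v.1 == a].
Definition lattice_col (l : nat) (b : 'I_l) : {set 'I_l * 'I_l} :=
  [set v | v.2 == b].
Definition lattice_edges (l : nat) : {set {set 'I_l * 'I_l}} :=
  [set lattice_row a | a : 'I_l] :|: [set lattice_col b | b : 'I_l].

From HB Require Import structures.
From mathcomp Require Import all_boot all_order all_algebra.
From mathcomp Require Import ring zify.
Set Implicit Arguments. Unset Strict Implicit. Unset Printing Implicit Defensive.
Import Order.TTheory GRing.Theory Num.Theory.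
Local Open Scope ring_scope.

(* With every vertex of degree 2, the Laplacian of the l-lattice is the
   Kronecker sum (J (x) I + I (x) J) / 2, where J is the all-ones l x l matrix.
   J / 2 is diagonalised by the all-ones vector (eigenvalue l/2) and the
   vectors e_0 - e_y, y <> 0 (eigenvalue 0); the tensor products of these
   vectors diagonalise the Laplacian, whose eigenvalues are therefore the
   pairwise sums: l once, l/2 for 2(l-1) pairs and 0 for (l-1)^2 pairs. *)

Lemma char_poly_similar (R : comNzRingType) n (P P' A : 'M[R]_n) :
  P' *m P = 1%:M -> char_poly (P *m A *m P') = char_poly A.
Proof.
move=> P'P; rewrite /char_poly /char_poly_mx.
have PP' : P *m P' = 1%:M by apply: mulmx1C.
have -> : 'X%:M - map_mx polyC (P *m A *m P') =
    map_mx polyC P *m ('X%:M - map_mx polyC A) *m map_mx polyC P'.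
  rewrite mulmxBr mulmxBl !map_mxM scalar_mxC; congr (_ - _).
  by rewrite -mulmxA -map_mxM PP' map_mx1 mulmx1.
by rewrite !det_mulmx mulrC mulrA -det_mulmx -map_mxM P'P map_mx1 det1 mul1r.
Qed.

Lemma sumr_delta (R : nzSemiRingType) (I : finType) (z : I) (G : I -> R) :
  \sum_y (y == z)%:R * G y = G z.
Proof.
rewrite (bigD1 z) //= eqxx mul1r big1 ?addr0 // => y /negbTE ->.
exact: mul0r.
Qed.

Section FinTypeMatrix.
Variables (R : comNzRingType) (V : finType).

Definition fmx (F : V -> V -> R) : 'M[R]_#|V| :=
  \matrix_(i, j) F (enum_val i) (enum_val j).

Lemma eq_fmx (F G : V -> V -> R) : (forall x y, F x y = G x y) -> fmx F = fmx G.
Proof. by move=> FG; apply/matrixP => i j; rewrite !mxE FG. Qed.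

Lemma fmxM (F G : V -> V -> R) :
  fmx F *m fmx G = fmx (fun x z => \sum_y F x y * G y z).
Proof.
apply/matrixP => i j; rewrite !mxE [RHS]big_enum_val.
by apply: eq_bigr => k _; rewrite !mxE.
Qed.

Lemma fmx1 : fmx (fun x y => (x == y)%:R) = 1%:M.
Proof. by apply/matrixP => i j; rewrite !mxE (inj_eq enum_val_inj). Qed.

Lemma fmx_diag (d : V -> R) :
  fmx (fun x y => (x == y)%:R * d y) = diag_mx (\row_j d (enum_val j)).
Proof.
apply/matrixP => i j; rewrite !mxE (inj_eq enum_val_inj) mulr_natl.
by case: eqP => [->|].
Qed.

Definition eigenbasis (F Q Q' : V -> V -> R) (d : V -> R) : Prop :=
  (forall x z, \sum_y Q' x y * Q y z = (x == z)%:R) /\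
  (forall x z, \sum_y F x y * Q y z = Q x z * d z).

Lemma char_poly_eigenbasis (F Q Q' : V -> V -> R) (d : V -> R) :
  eigenbasis F Q Q' d -> char_poly (fmx F) = \prod_x ('X - (d x)%:P).
Proof.
move=> [Q'Q FQ].
have Q'Qmx : fmx Q' *m fmx Q = 1%:M by rewrite fmxM -fmx1; apply: eq_fmx.
have FQ' : fmx F *m fmx Q = fmx Q *m diag_mx (\row_j d (enum_val j)).
  rewrite -fmx_diag !fmxM; apply: eq_fmx => x z.
  by rewrite FQ (eq_bigr _ (fun y _ => mulrCA _ _ _)) sumr_delta.
have -> : fmx F = fmx Q *m diag_mx (\row_j d (enum_val j)) *m fmx Q'.
  by rewrite -FQ' -mulmxA (mulmx1C Q'Qmx) mulmx1.
rewrite char_poly_similar // char_poly_trig ?diag_mx_is_trig //.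
by rewrite [RHS]big_enum_val; apply: eq_bigr => i _; rewrite !mxE eqxx mulr1n.
Qed.

End FinTypeMatrix.

Lemma big_pair (T : Type) (idx : T) (op : Monoid.com_law idx) (U W : finType)
    (G : U * W -> T) :
  \big[op/idx]_y G y = \big[op/idx]_u \big[op/idx]_w G (u, w).
Proof. by rewrite pair_bigA; apply: eq_bigr => -[]. Qed.

Section KroneckerSum.
Variables (R : comNzRingType) (U W : finType).

Definition kron_sum (A : U -> U -> R) (B : W -> W -> R) (x y : U * W) : R :=
  A x.1 y.1 * (x.2 == y.2)%:R + (x.1 == y.1)%:R * B x.2 y.2.

Lemma eigenbasis_kron_sum A Q Q' a B P P' b :
  eigenbasis A Q Q' a -> eigenbasis B P P' b ->
  eigenbasis (kron_sum A B)
    (fun x y => Q x.1 y.1 * P x.2 y.2) (fun x y => Q' x.1 y.1 * P' x.2 y.2)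
    (fun y => a y.1 + b y.2).
Proof.
move=> [Q'Q AQ] [P'P BP]; split=> x z; rewrite big_pair.
  transitivity ((\sum_u Q' x.1 u * Q u z.1) * \sum_w P' x.2 w * P w z.2).
    rewrite mulr_suml; apply: eq_bigr => u _; rewrite mulr_sumr.
    by apply: eq_bigr => w _ /=; ring.
  by rewrite Q'Q P'P -natrM mulnb.
transitivity ((\sum_u A x.1 u * Q u z.1) * (\sum_w (w == x.2)%:R * P w z.2)
    + (\sum_u (u == x.1)%:R * Q u z.1) * \sum_w B x.2 w * P w z.2).
  rewrite !mulr_suml -big_split; apply: eq_bigr => u _; rewrite !mulr_sumr.
  rewrite -big_split; apply: eq_bigr => w _ /=.
  by rewrite /kron_sum /= [x.1 == u]eq_sym [x.2 == w]eq_sym; ring.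
by rewrite AQ BP !sumr_delta /=; ring.
Qed.

End KroneckerSum.

Section ConstEigenvalue.
Variables (R : comNzRingType) (m : nat).

Definition const_eigenvalue (mu : R) (y : 'I_m.+1) : R :=
  if y == ord0 then mu else 0.

Lemma prod_const_eigenvalue (T : comNzRingType) (mu : R) (F : R -> T) :
  \prod_(y < m.+1) F (const_eigenvalue mu y) = F mu * F 0 ^+ m.
Proof.
rewrite big_ord_recl /const_eigenvalue eqxx.
under eq_bigr do rewrite eq_sym (negbTE (neq_lift _ _)).
by rewrite prodr_const card_ord.
Qed.

Lemma prod_const_eigenvalue_pairs (mu : R) :
  \prod_(x : 'I_m.+1 * 'I_m.+1)
      ('X - (const_eigenvalue mu x.1 + const_eigenvalue mu x.2)%:P)
    = ('X - (mu + mu)%:P) * ('X - mu%:P) ^+ (2 * m) * 'X ^+ (m * m).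
Proof.
rewrite big_pair /=.
under eq_bigr do rewrite (prod_const_eigenvalue mu
  (fun t => 'X - (const_eigenvalue mu _ + t)%:P)).
rewrite (prod_const_eigenvalue mu
  (fun s => ('X - (s + mu)%:P) * ('X - (s + 0)%:P) ^+ m)).
rewrite !addr0 add0r polyC0 subr0 mul2n -addnn exprD exprM exprMn; ring.
Qed.

End ConstEigenvalue.

Section ConstMatrix.
Variables (R : fieldType) (m : nat).
Local Notation n := m.+1.
Hypothesis n_neq0 : n%:R != 0 :> R.

Definition const_eigvec (x y : 'I_n) : R :=
  if y == ord0 then 1 else (x == ord0)%:R - (x == y)%:R.

Definition const_eigvec_inv (y x : 'I_n) : R :=
  n%:R^-1 - ((y != ord0) && (x == y))%:R.

Lemma sum_const_eigvec y : \sum_x const_eigvec x y = const_eigenvalue n%:R y.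
Proof.
rewrite /const_eigvec /const_eigenvalue; case: eqP => _.
  by rewrite sumr_const card_ord.
have sum1 c : \sum_(x < n) (x == c)%:R = 1 :> R.
  by rewrite (bigD1 c) //= eqxx big1 ?addr0 // => x /negbTE ->.
by rewrite sumrB !sum1 subrr.
Qed.

Lemma eigenbasis_const (c : R) :
  eigenbasis (fun _ _ : 'I_n => c) const_eigvec const_eigvec_inv
    (const_eigenvalue (c * n%:R)).
Proof.
split=> x z; last first.
  rewrite -mulr_sumr sum_const_eigvec /const_eigvec /const_eigenvalue.
  by case: eqP; rewrite ?mul1r ?mulr0.
have -> : \sum_y const_eigvec_inv x y * const_eigvec y z =
    n%:R^-1 * \sum_y const_eigvec y z
    - (x != ord0)%:R * \sum_y (y == x)%:R * const_eigvec y z.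
  rewrite !mulr_sumr -sumrB; apply: eq_bigr => y _; rewrite /const_eigvec_inv.
  by case: (x != ord0); case: (y == x); rewrite /= ?mulr1n ?mulr0n; ring.
rewrite sumr_delta sum_const_eigvec /const_eigvec /const_eigenvalue.
have [->|z_neq0] := eqVneq z ord0.
  by rewrite mulVf // mulr1; case: eqP; rewrite /= ?subr0 ?subrr.
rewrite mulr0 sub0r; have [->|x_neq0] := eqVneq x ord0.
  by rewrite eq_sym (negbTE z_neq0) mul0r oppr0.
by rewrite /= mul1r sub0r opprK.
Qed.

End ConstMatrix.

Section Lattice.
Variable k : nat.
Local Notation l := k.+2.

Lemma lattice_row_neq_col (a b : 'I_l) : lattice_row a != lattice_col b.
Proof.
apply/eqP => row_col.
have : (a, inord 0) \in lattice_col b by rewrite -row_col inE.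
have : (a, inord 1) \in lattice_col b by rewrite -row_col inE.
rewrite !inE /= => /eqP <- /eqP/(congr1 val).
by rewrite /= !inordK.
Qed.

Lemma lattice_edges_through (v w : 'I_l * 'I_l) :
  [set h in lattice_edges l | (v \in h) && (w \in h)] =
    (if v.1 == w.1 then [set lattice_row v.1] else set0) :|:
    (if v.2 == w.2 then [set lattice_col v.2] else set0).
Proof.
apply/setP => h; rewrite /lattice_edges !inE; apply/idP/idP.
  case/andP => /orP[/imsetP[a _ ->] | /imsetP[b _ ->]];
    rewrite !inE => /andP[/eqP-> /eqP->]; rewrite eqxx inE eqxx ?orbT //.
case/orP; case: eqP => vw; rewrite ?inE // => /eqP->; rewrite !inE vw !eqxx.
  by rewrite imset_f.
by rewrite [X in _ || X]imset_f ?orbT.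
Qed.

Lemma hcommon_lattice (v w : 'I_l * 'I_l) :
  hcommon (lattice_edges l) v w = ((v.1 == w.1) + (v.2 == w.2))%N.
Proof.
rewrite /hcommon lattice_edges_through cardsU.
have -> : (if v.1 == w.1 then [set lattice_row v.1] else set0) :&:
    (if v.2 == w.2 then [set lattice_col v.2] else set0) = set0.
  case: (v.1 == w.1); case: (v.2 == w.2); rewrite ?set0I ?setI0 //.
  by apply/disjoint_setI0; rewrite disjoints1 inE; apply: lattice_row_neq_col.
by case: (v.1 == w.1); case: (v.2 == w.2); rewrite ?cards1 ?cards0.
Qed.

Lemma hdeg_lattice (v : 'I_l * 'I_l) : hdeg (lattice_edges l) v = 2.
Proof.
transitivity (hcommon (lattice_edges l) v v).
  by apply: eq_card => h; rewrite !inE andbb.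
by rewrite hcommon_lattice !eqxx.
Qed.

Lemma hLaplacian_lattice (R : numFieldType) :
  hLaplacian R (lattice_edges l) =
    fmx (kron_sum (fun _ _ => 2^-1) (fun _ _ => 2^-1)).
Proof.
rewrite /hLaplacian; have -> : hDeg R (lattice_edges l) = 2%:M.
  by apply/matrixP => i j; rewrite !mxE hdeg_lattice; case: eqP.
rewrite invmx_scalar mul_scalar_mx.
apply/matrixP => i j; rewrite !mxE hcommon_lattice /kron_sum.
have [->|_] := eqVneq i j; rewrite ?eqxx /=.
  by rewrite mulr0 subr0; field.
by rewrite sub0r mulrN opprK natrD; ring.
Qed.

Lemma char_poly_lattice (R : numFieldType) :
  char_poly (hLaplacian R (lattice_edges l)) =
    \prod_(x : 'I_l * 'I_l) ('X - (const_eigenvalue (2^-1 * l%:R) x.1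
                                   + const_eigenvalue (2^-1 * l%:R) x.2)%:P).
Proof.
have l_neq0 : l%:R != 0 :> R by rewrite pnatr_eq0.
rewrite hLaplacian_lattice; apply: char_poly_eigenbasis.
exact: eigenbasis_kron_sum
  (eigenbasis_const l_neq0 _) (eigenbasis_const l_neq0 _).
Qed.

End Lattice.

Theorem mainTheorem9 (R : realFieldType) (l : nat) (hl : (2 <= l)%N) :
  char_poly (hLaplacian R (lattice_edges l)) =
    ('X - 0%:P) ^+ (l * l - 2 * l + 1)
    * ('X - (l%:R / 2 : R)%:P) ^+ (2 * (l - 1))
    * ('X - (l%:R : R)%:P) ^+ 1.
Proof.
case: l hl => [|[|k]] // _.
rewrite char_poly_lattice prod_const_eigenvalue_pairs.
have -> : (k.+2 * k.+2 - 2 * k.+2 + 1 = k.+1 * k.+1)%N by lia.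
have -> : 2^-1 * k.+2%:R + 2^-1 * k.+2%:R = k.+2%:R :> R by field.
rewrite subn1 /= polyC0 subr0 expr1 [2^-1 * _]mulrC; ring.
Qed.
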